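(* Let $G$ be a graph, $k$ a positive integer, and $V_1,\dots,V_t$ a partition of $V(G)$ into types as described in the context. If $G$ has a star coloring using at most $k$ colors, then the integer program $\mathrm{ILP}(G,k,V_1,\dots,V_t)$ described in the context has a feasible assignment.
   Context: All graphs are finite, simple, undirected and connected. A star coloring of $G$ with at most $k$ colors is a map $f:V(G)\to\{1,\dots,k\}$ with $f(u)\neq f(v)$ for every edge $uv$ such that every path on four vertices (not necessarily induced) receives at least three distinct colors. Two vertices $u,v$ have the same type if $N(u)\setminus\{v\}=N(v)\setminus\{u\}$; $V_1,\dots,V_t$ is a partition of $V(G)$ into nonempty sets in each of which all vertices pairwise have the same type. Then each $G[V_i]$ is a clique or an independent set; $V_i$ is called a clique type if $G[V_i]$ is complete and an independent type if $G[V_i]$ has no edges. For $i\neq j$, either every vertex of $V_i$ is adjacent to every vertex of $V_j$ (write $V_j\in adj(V_i)$) or there are no edges between them. For $A\subseteq[t]$ let $T_A=\{V_i: i\in A\}$. The program $\mathrm{ILP}(G,k,V_1,\dots,V_t)$ has one integer variable $n_A$ for every $A\subseteq[t]$ and the following constraints: (C0) $n_A=0$ (the variable is discarded) whenever $T_A$ contains two types $V_i,V_j$ with $V_j\in adj(V_i)$; (C1) $\sum_{A\subseteq[t]} n_A\le k$; (C2) for each clique type $V_i$: $\sum_{A: V_i\in T_A} n_A=|V_i|$; (C3) for each independent type $V_i$: $1\le \sum_{A:V_i\in T_A} n_A\le \min\{k,|V_i|\}$; (C4) for every four distinct types $V_{i_1},V_{i_2},V_{i_3},V_{i_4}$ with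 $V_{i_1},V_{i_3}\in adj(V_{i_2})$ and $V_{i_4}\in adj(V_{i_3})$: if $\sum_{A: V_{i_1},V_{i_3}\in T_A} n_A\ge 1$ then $\sum_{B: V_{i_2},V_{i_4}\in T_B} n_B=0$; (C5) for every three distinct types $V_{i_1},V_{i_2},V_{i_3}$ with $V_{i_1}$ an independent type and $V_{i_2},V_{i_3}\in adj(V_{i_1})$: if $\sum_{A:V_{i_1}\in T_A} n_A<|V_{i_1}|$ then $\sum_{B: V_{i_2},V_{i_3}\in T_B} n_B=0$; (C6) for every two distinct independent types $V_{i_1},V_{i_2}$ with $V_{i_1}\in adj(V_{i_2})$: if $\sum_{A:V_{i_1}\in T_A} n_A<|V_{i_1}|$ then $\sum_{B:V_{i_2}\in T_B} n_B=|V_{i_2}|$, and symmetrically with $i_1,i_2$ swapped; (C7) $n_A\ge 0$ for all $A\subseteq[t]$. A feasible assignment is an assignment of integer values to all $n_A$ satisfying (C0)–(C7). *)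

From mathcomp Require Import all_boot all_order all_algebra.
Set Implicit Arguments. Unset Strict Implicit. Unset Printing Implicit Defensive.
Import Order.TTheory GRing.Theory Num.Theory.

Definition simple_graph (V : finType) (e : rel V) : Prop :=
  irreflexive e /\ symmetric e.

Definition connected_graph (V : finType) (e : rel V) : Prop :=
  forall u v : V, connect e u v.

Definition star_coloring (V : finType) (e : rel V) (k : nat) (f : V -> 'I_k) : Prop :=
  (forall u v, e u v -> f u != f v) /\
  (forall a b c d : V, uniq [:: a; b; c; d] -> e a b -> e b c -> e c d ->
     2 < #|[set f a; f b; f c; f d]|).

Definition same_type (V : finType) (e : rel V) (u v : V) : Prop :=
  [set w | e u w] :\ v = [set w | e v w] :\ u.

(* p assigns to each vertex its part; parts V_i = p^-1(i), i : 'I_t. *)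
Definition part (V : finType) (t : nat) (p : V -> 'I_t) (i : 'I_t) : {set V} :=
  [set v | p v == i].

Definition type_partition (V : finType) (e : rel V) (t : nat) (p : V -> 'I_t) : Prop :=
  (forall i : 'I_t, part p i != set0) /\
  (forall u v : V, p u = p v -> same_type e u v).

Definition clique_type (V : finType) (e : rel V) (t : nat) (p : V -> 'I_t) (i : 'I_t) : Prop :=
  forall u v, u \in part p i -> v \in part p i -> u != v -> e u v.

Definition indep_type (V : finType) (e : rel V) (t : nat) (p : V -> 'I_t) (i : 'I_t) : Prop :=
  forall u v, u \in part p i -> v \in part p i -> ~~ e u v.

Definition adjT (V : finType) (e : rel V) (t : nat) (p : V -> 'I_t) (i j : 'I_t) : Prop :=
  i != j /\ forall u v, u \in part p i -> v \in part p j -> e u v.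

Local Open Scope ring_scope.

Definition sumT (t : nat) (n : {set 'I_t} -> int) (S : {set 'I_t}) : int :=
  \sum_(A : {set 'I_t} | S \subset A) n A.

Definition ILP_feasible (V : finType) (e : rel V) (k t : nat) (p : V -> 'I_t)
  (n : {set 'I_t} -> int) : Prop :=
  (forall A : {set 'I_t}, (exists i j, [/\ i \in A, j \in A & adjT e p i j]) -> n A = 0) /\
  (\sum_(A : {set 'I_t}) n A <= k%:Z) /\
  (forall i, clique_type e p i -> sumT n [set i] = #|part p i|%:Z) /\
  (forall i, indep_type e p i ->
     1 <= sumT n [set i] /\ sumT n [set i] <= (minn k #|part p i|)%:Z) /\
  (forall i1 i2 i3 i4 : 'I_t, uniq [:: i1; i2; i3; i4] ->
     adjT e p i2 i1 -> adjT e p i2 i3 -> adjT e p i3 i4 ->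
     1 <= sumT n [set i1; i3] -> sumT n [set i2; i4] = 0) /\
  (forall i1 i2 i3 : 'I_t, uniq [:: i1; i2; i3] -> indep_type e p i1 ->
     adjT e p i1 i2 -> adjT e p i1 i3 ->
     sumT n [set i1] < #|part p i1|%:Z -> sumT n [set i2; i3] = 0) /\
  (* C6 (the symmetric version is the instance with i1, i2 swapped) *)
  (forall i1 i2 : 'I_t, i1 != i2 -> indep_type e p i1 -> indep_type e p i2 ->
     adjT e p i2 i1 ->
     sumT n [set i1] < #|part p i1|%:Z -> sumT n [set i2] = #|part p i2|%:Z) /\
  (forall A, 0 <= n A).

(* Given a star colouring f, let T_c be the set of types that contain a vertex
   of colour c, and let n_A be the number of colours c with T_c = A.  Then
   the sum of n_A over all A containing S counts the colours occurring in
   every type of S; in particular the sum over A containing V_i is |f(V_i)|.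
   Every constraint then becomes a property of f: adjacent types share no
   colour and cliques are rainbow because f is proper, while (C4)-(C6) each
   hold because their failure would produce a path on four vertices coloured
   with only two colours. *)

From mathcomp Require Import all_boot all_order all_algebra.
Set Implicit Arguments. Unset Strict Implicit. Unset Printing Implicit Defensive.

Local Open Scope ring_scope.

Lemma card_imset_ltP (T T' : finType) (g : T -> T') (A : {set T}) :
  (#|g @: A| < #|A|)%N -> exists a b, [/\ a \in A, b \in A, a != b & g a = g b].
Proof.
move=> ltA; case: (boolP [exists a in A, exists b in A, (a != b) && (g a == g b)]).
  by case/exists_inP=> a aA /exists_inP[b bA /andP[neq_ab /eqP gab]]; exists a, b.
move/exists_inPn=> noncollide; suff /eqP eqA : #|g @: A| == #|A| by rewrite eqA ltnn in ltA.
apply/imset_injP=> a b aA bA gab; apply: contraNeq (noncollide a aA) => neq_ab.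
by apply/exists_inP; exists b; rewrite // neq_ab gab eqxx.
Qed.

Lemma card_imset_le_min (T T' : finType) (g : T -> T') (A : {set T}) :
  (#|g @: A| <= minn #|T'| #|A|)%N.
Proof. by rewrite leq_min leq_imset_card max_card. Qed.

Lemma part_neq (V : finType) (t : nat) (p : V -> 'I_t) (i j : 'I_t) (u v : V) :
  u \in part p i -> v \in part p j -> i != j -> u != v.
Proof. by rewrite !inE => /eqP <- /eqP <-; apply: contra => /eqP ->. Qed.

Lemma adjT_edge (V : finType) (e : rel V) (t : nat) (p : V -> 'I_t) (i j : 'I_t) (u v : V) :
  adjT e p i j -> u \in part p i -> v \in part p j -> e u v.
Proof. by case=> _; apply. Qed.

Section ColourCount.

Variables (V : finType) (k t : nat) (p : V -> 'I_t) (f : V -> 'I_k).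

Definition colour_types (c : 'I_k) : {set 'I_t} :=
  [set i | [exists v, (p v == i) && (f v == c)]].

Definition colour_count (A : {set 'I_t}) : int :=
  #|[set c | colour_types c == A]|%:Z.

Lemma mem_colour_types i c : (i \in colour_types c) = (c \in f @: part p i).
Proof.
rewrite inE; apply/existsP/imsetP.
  by case=> v /andP[/eqP pv /eqP fv]; exists v; rewrite // inE pv.
by case=> v; rewrite inE => /eqP pv ->; exists v; rewrite pv !eqxx.
Qed.

Lemma sumT_colour_count S :
  sumT colour_count S = #|[set c | S \subset colour_types c]|%:Z.
Proof.
rewrite /sumT /colour_count -(big_morph Posz PoszD (erefl 0%Z)) -sum1_card.
congr Posz; rewrite (partition_big colour_types (fun A => S \subset A)) => [|c]; last first.
  by rewrite inE.
apply: eq_bigr => A SA; rewrite -sum1_card; apply: eq_bigl => c.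
by rewrite !inE; case: eqP => [->|]; rewrite ?SA ?andbF.
Qed.

Lemma sum_colour_count : \sum_A colour_count A = k%:Z.
Proof.
have := sumT_colour_count set0; rewrite /sumT (eq_bigl predT) => [->|A]; last first.
  by rewrite sub0set.
by congr Posz; rewrite -[RHS]card_ord; apply: eq_card => c; rewrite inE sub0set.
Qed.

Lemma sumT_colour_count1 i : sumT colour_count [set i] = #|f @: part p i|%:Z.
Proof.
by rewrite sumT_colour_count; congr Posz; apply: eq_card => c; rewrite inE sub1set mem_colour_types.
Qed.

Lemma sumT_colour_count2 i j :
  sumT colour_count [set i; j] = #|f @: part p i :&: f @: part p j|%:Z.
Proof.
rewrite sumT_colour_count; congr Posz; apply: eq_card => c.
by rewrite !inE subUset !sub1set !mem_colour_types.
Qed.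

End ColourCount.

Section StarColouring.

Variables (V : finType) (e : rel V) (k t : nat) (p : V -> 'I_t) (f : V -> 'I_k).
Hypothesis (sym_e : symmetric e) (star_f : star_coloring e f).

Let proper_f u v : e u v -> f u != f v. Proof. exact: star_f.1. Qed.

(* The two remaining distinctness conditions of a P4 follow from properness:
   a = d would give f a = f c = f b for the edge ab. *)
Lemma no_bicoloured_P4 a b c d : e a b -> e b c -> e c d ->
  a != c -> b != d -> f a = f c -> f b = f d -> False.
Proof.
move=> ab bc cd neq_ac neq_bd fac fbd.
have neq_edge u v : e u v -> u != v by move/proper_f; apply: contra => /eqP ->.
have neq_ad : a != d by apply: contraTneq (proper_f ab) => ad; rewrite fbd -ad fac negbK.
have uniq_abcd : uniq [:: a; b; c; d].
  rewrite /= !inE !negb_or neq_ac neq_ad neq_bd.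
  by rewrite (neq_edge _ _ ab) (neq_edge _ _ bc) (neq_edge _ _ cd).
have := star_f.2 a b c d uniq_abcd ab bc cd; rewrite fac fbd ltnNge.
suff -> : [set f c; f d; f c; f d] = [set f c; f d] by rewrite cards2 ltnS leq_b1.
by apply/setP => z; rewrite !inE; case: (z == f c); case: (z == f d).
Qed.

Lemma adjT_disjoint_colours i j : adjT e p i j -> f @: part p i :&: f @: part p j = set0.
Proof.
move=> aij; apply/setP => c; rewrite !inE; apply/negbTE/andP.
case=> /imsetP[u ui ->] /imsetP[v vj /eqP]; apply/negP.
exact: proper_f (adjT_edge aij ui vj).
Qed.

Lemma colour_count_adjT (A : {set 'I_t}) i j :
  i \in A -> j \in A -> adjT e p i j -> colour_count p f A = 0.
Proof.
move=> iA jA aij; apply/eqP; rewrite eqz_nat cards_eq0; apply/eqP/setP => c.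
rewrite !inE; apply/negbTE/eqP => TA; move: iA jA; rewrite -TA !mem_colour_types.
move=> ci cj; have : c \in f @: part p i :&: f @: part p j by rewrite inE ci cj.
by rewrite (adjT_disjoint_colours aij) inE.
Qed.

Lemma card_colours_clique i : clique_type e p i -> #|f @: part p i| = #|part p i|.
Proof.
move=> cl; apply/eqP/imset_injP => u v ui vi fuv; apply/eqP/contraT => nuv.
by have := proper_f (cl u v ui vi nuv); rewrite fuv eqxx.
Qed.

Lemma colours_P4_disjoint i1 i2 i3 i4 : i1 != i3 -> i2 != i4 ->
  adjT e p i2 i1 -> adjT e p i2 i3 -> adjT e p i3 i4 ->
  f @: part p i1 :&: f @: part p i3 != set0 ->
  f @: part p i2 :&: f @: part p i4 = set0.
Proof.
move=> n13 n24 a21 a23 a34 /set0Pn[c]; rewrite inE => /andP[].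
move=> /imsetP[a ai ->] /imsetP[c' ci fac]; apply/setP => d; rewrite !inE.
apply/negbTE/andP; case=> /imsetP[b bi ->] /imsetP[d' di fbd].
apply: (no_bicoloured_P4 (a := a) (b := b) (c := c') (d := d')) => //.
- by rewrite sym_e (adjT_edge a21 bi ai).
- exact: adjT_edge a23 bi ci.
- exact: adjT_edge a34 ci di.
- exact: part_neq ai ci n13.
- exact: part_neq bi di n24.
Qed.

Lemma repeated_colour_disjoint i1 i2 i3 : i2 != i3 ->
  adjT e p i1 i2 -> adjT e p i1 i3 -> (#|f @: part p i1| < #|part p i1|)%N ->
  f @: part p i2 :&: f @: part p i3 = set0.
Proof.
move=> n23 a12 a13 /card_imset_ltP[a [b [ai bi nab fab]]].
apply/setP => c; rewrite !inE; apply/negbTE/andP.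
case=> /imsetP[x xi ->] /imsetP[y yi fxy].
apply: (no_bicoloured_P4 (a := x) (b := a) (c := y) (d := b)) => //.
- by rewrite sym_e (adjT_edge a12 ai xi).
- exact: adjT_edge a13 ai yi.
- by rewrite sym_e (adjT_edge a13 bi yi).
- exact: part_neq xi yi n23.
Qed.

Lemma repeated_colour_adjT i1 i2 : adjT e p i2 i1 ->
  (#|f @: part p i1| < #|part p i1|)%N -> #|f @: part p i2| = #|part p i2|.
Proof.
move=> a21 /card_imset_ltP[a [b [ai bi nab fab]]].
apply/eqP/imset_injP => x y xi yi fxy; apply/eqP/contraT => nxy; exfalso.
apply: (no_bicoloured_P4 (a := a) (b := x) (c := b) (d := y)) => //.
- by rewrite sym_e (adjT_edge a21 xi ai).
- exact: adjT_edge a21 xi bi.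
- by rewrite sym_e (adjT_edge a21 yi bi).
Qed.

End StarColouring.

Theorem lemma2 (V : finType) (e : rel V) (k t : nat) (p : V -> 'I_t) :
  simple_graph e -> connected_graph e -> (0 < k)%N ->
  type_partition e p ->
  (exists f : V -> 'I_k, star_coloring e f) ->
  exists n : {set 'I_t} -> int, ILP_feasible e k p n.
Proof.
move=> [_ sym_e] _ _ [nonempty _] [f star_f].
exists (colour_count p f); split; [|split; [|split; [|split; [|split; [|split; [|split]]]]]].
- by move=> A [i [j [iA jA aij]]]; apply: colour_count_adjT aij.
- by rewrite sum_colour_count.
- by move=> i cl; rewrite sumT_colour_count1 (card_colours_clique star_f cl).
- move=> i _; have := card_imset_le_min f (part p i); rewrite card_ord => le_min.
  rewrite sumT_colour_count1 !lez_nat le_min; split=> //.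
  by have /set0Pn[v vi] := nonempty i; apply/card_gt0P; exists (f v); apply: imset_f.
- move=> i1 i2 i3 i4; rewrite /= !inE !negb_or.
  move=> /andP[/and3P[_ n13 _] /andP[/andP[_ n24] _]] a21 a23 a34.
  rewrite !sumT_colour_count2 lez_nat card_gt0 => /(colours_P4_disjoint sym_e star_f).
  by move=> /(_ i2 i4 n13 n24 a21 a23 a34) ->; rewrite cards0.
- move=> i1 i2 i3; rewrite /= !inE !negb_or => /andP[_ /andP[n23 _]] _ a12 a13.
  rewrite sumT_colour_count1 sumT_colour_count2 ltz_nat => rep.
  by rewrite (repeated_colour_disjoint sym_e star_f n23 a12 a13 rep) cards0.
- move=> i1 i2 _ _ _ a21; rewrite !sumT_colour_count1 ltz_nat => rep.
  by rewrite (repeated_colour_adjT sym_e star_f a21 rep).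
- by [].
Qed.
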